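(* Fix simple objects $j,k$ of $\mathcal{C}$. For each simple $i$ with $(i,j,k)$ admissible and each admissible $(a,i,b)$, put $$u^{ab}_i=\sum_pF^{ajk}_{b;ip}\;v^{ap}_j\otimes v^{pb}_k\ \in V_j\otimes V_k .$$ Then the subspace of $V_j\otimes V_k$ spanned by the $u^{ab}_i$ (for fixed $i$) is an $H_\mathcal{C}$-submodule isomorphic to $V_i$ via $v^{ab}_i\mapsto u^{ab}_i$, and $$V_j\otimes V_k\cong\bigoplus_{i:\,(i,j,k)\text{ admissible}}V_i .$$
   Context: $\mathcal{C}$ is a unitary fusion category, multiplicity free, whose simple objects are self-dual with trivial Frobenius–Schur indicators; $d_a$ quantum dimensions; $(a,b,c)$ admissible iff $\mathrm{Hom}(a\otimes b,c)\ne0$. Trivalent vertices are normalized so $\theta(a,b,c)=\sqrt{d_ad_bd_c}$; $F^{abc}_{d;nm}$ are the (unitary) $F$-symbols: the basis vector of $\mathrm{Hom}((a\otimes b)\otimes c,d)$ with intermediate $m$ equals $\sum_nF^{abc}_{d;nm}$ times that of $\mathrm{Hom}(a\otimes(b\otimes c),d)$ with intermediate $n$. $H_\mathcal{C}$ has basis $e^{ab}_{i;cd}$ ($(a,i,b)$, $(i,d,c)$ admissible), multiplication $e^{ab}_{i;cd}e^{a'b'}_{i';c'd'}=\frac{\delta_{c,a'}\delta_{d,b'}\delta_{i,i'}}{\sqrt{d_i}}e^{ab}_{i;c'd'}$, unit $\eta=\sum_{a,b,i}\sqrt{d_i}e^{ab}_{i;ab}$ and comultiplication $\Delta(e^{ab}_{i;cd})=\sum_{j,k,p,q}\frac{\sqrt{d_jd_k}}{\sqrt{d_i}}F^{ajk}_{b;ip}F^{dkj}_{c;iq}e^{ap}_{j;cq}\otimes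 e^{pb}_{k;qd}$ (sum over $j,k$ admissible with $i$). $V_i$ is the $H_\mathcal{C}$-module with basis $v^{ab}_i$ ($(a,i,b)$ admissible) and $e^{ab}_{l;cd}\cdot v^{pq}_i=\frac{\delta_{i,l}\delta_{c,p}\delta_{d,q}}{\sqrt{d_i}}v^{ab}_i$. The tensor product of $H_\mathcal{C}$-modules is $U\otimes V=\Delta(\eta)\cdot(U\otimes_\mathbb{C}V)$ with $H_\mathcal{C}$ acting through $\Delta$. *)

From HB Require Import structures.
From mathcomp Require Import all_boot all_order all_algebra.
Set Implicit Arguments.
Unset Strict Implicit.
Unset Printing Implicit Defensive.
Import Order.TTheory GRing.Theory Num.Theory.
Local Open Scope ring_scope.

(* Skeletal data of a unitary, multiplicity-free fusion category all   *)
(* of whose simples are self-dual with trivial Frobenius-Schur         *)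
(* indicators, with trivalent vertices normalised so that              *)
(* theta(a,b,c) = sqrt(d_a d_b d_c) (isotopy-invariant, unoriented     *)
(* graphical calculus).                                                 *)
(*   lab          : the finite set of (isoclasses of) simple objects    *)
(*   adm a b c    : (a,b,c) admissible, i.e. Hom(a (x) b, c) <> 0       *)
(*   F a b c d n m: the F-symbol F^{abc}_{d;nm} (m intermediate of       *)
(*                  (a (x) b) (x) c, n intermediate of a (x) (b (x) c)); *)
(*                  by convention 0 on non-admissible labels.           *)

Record UFC (C : numClosedFieldType) := MkUFC {
  lab : finType;
  one : lab;
  adm : lab -> lab -> lab -> bool;
  dim : lab -> C;
  F : lab -> lab -> lab -> lab -> lab -> lab -> C;
  (* self-duality: admissibility is invariant under all permutations *)
  adm_sym12 : forall a b c, adm a b c = adm b a c;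
  adm_sym23 : forall a b c, adm a b c = adm a c b;
  adm_one : forall a b, adm one a b = (a == b);
  adm_assoc : forall a b c d,
    (\sum_(e : lab) (adm a b e && adm e c d))%N =
    (\sum_(f : lab) (adm b c f && adm a f d))%N;
  dim_pos : forall a, 0 < dim a;
  dim_one : dim one = 1;
  dim_fusion : forall a b,
    dim a * dim b = \sum_(c : lab) (if adm a b c then dim c else 0);
  F_supp : forall a b c d n m,
    ~~ [&& adm a b m, adm m c d, adm b c n & adm a n d] -> F a b c d n m = 0;
  F_unitary_rows : forall a b c d n n',
    \sum_(m : lab) F a b c d n m * (F a b c d n' m)^* =
    (if [&& n == n', adm b c n & adm a n d] then 1 else 0);
  F_unitary_cols : forall a b c d m m',
    \sum_(n : lab) (F a b c d n m)^* * F a b c d n m' =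
    (if [&& m == m', adm a b m & adm m c d] then 1 else 0);
  F_pentagon : forall a b c d e p q r s,
    F p c d e r q * F a b r e s p =
    \sum_(t : lab) F a b c q t p * F a t d e s q * F b c d s r t;
  F_unit1 : forall b c d n m,
    F one b c d n m = (if [&& n == d, m == b & adm b c d] then 1 else 0);
  F_unit2 : forall a c d n m,
    F a one c d n m = (if [&& n == c, m == a & adm a c d] then 1 else 0);
  F_unit3 : forall a b d n m,
    F a b one d n m = (if [&& n == b, m == d & adm a b d] then 1 else 0);
  (* tetrahedral symmetry of the (unitary, isotopy invariant) 6j-symbols:
     Tet = F^{abc}_{d;nm} sqrt(d_a d_b d_c d_d) is invariant under the
     rotations of the tetrahedron and complex conjugated by reflections;
     the three transpositions below generate S_4. *)
  F_tet12 : forall a b c d n m,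
    F d c b a n m * sqrtC (dim d * dim c * dim b * dim a) =
    (F a b c d n m * sqrtC (dim a * dim b * dim c * dim d))^*;
  F_tet34 : forall a b c d n m,
    F b a d c n m * sqrtC (dim b * dim a * dim d * dim c) =
    (F a b c d n m * sqrtC (dim a * dim b * dim c * dim d))^*;
  F_tet13 : forall a b c d n m,
    F n b m d a c * sqrtC (dim n * dim b * dim m * dim d) =
    (F a b c d n m * sqrtC (dim a * dim b * dim c * dim d))^*
}.

Arguments one {C} u : rename.
Arguments adm {C} u _ _ _ : rename.
Arguments dim {C} u _ : rename.
Arguments F {C} u _ _ _ _ _ _ : rename.

Section Tube.
Variables (C : numClosedFieldType) (U : UFC C).
Local Notation L := (lab U).
Local Notation adm := (adm U).
Local Notation dim := (dim U).
Local Notation F := (F U).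

Definition vec (I : finType) := {ffun I -> C}.
Definition delta (I : finType) (i : I) : vec I := [ffun w => (w == i)%:R].
Definition vscale (I : finType) (a : C) (x : vec I) : vec I := [ffun w => a * x w].
Definition vadd (I : finType) (x y : vec I) : vec I := [ffun w => x w + y w].
Definition vzero (I : finType) : vec I := [ffun => 0].
Definition vsum (J I : finType) (P : pred J) (f : J -> vec I) : vec I :=
  [ffun w => \sum_(t | P t) f t w].
Definition lin (I J : finType) (f : vec I -> vec J) :=
  forall a x y, f (vadd (vscale a x) y) = vadd (vscale a (f x)) (f y).

(* ---- the algebra H_C: basis e^{ab}_{i;cd}, index (a,b,i,c,d) ---- *)
Definition Hidx : finType := (L * L * L * L * L)%type.
Definition Hadm (t : Hidx) : bool :=
  let: (a, b, i, c, d) := t in adm a i b && adm i d c.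
Definition inH (h : vec Hidx) := forall t, ~~ Hadm t -> h t = 0.
Definition ebasis (t : Hidx) : vec Hidx := delta t.

(* unit  eta = sum_{a,b,i} sqrt(d_i) e^{ab}_{i;ab} *)
Definition eta : vec Hidx :=
  [ffun t => let: (a, b, i, c, d) := t in
     if [&& c == a, d == b & adm a i b] then sqrtC (dim i) else 0].

(* comultiplication, with values in H_C (x) H_C = vec (Hidx * Hidx)%type *)
Definition Delta_basis (t : Hidx) : vec (Hidx * Hidx)%type :=
  let: (a, b, i, c, d) := t in
  [ffun s => let: ((a1, p, j, c1, q), (p2, b2, k, q2, d2)) := s in
     if [&& a1 == a, c1 == c, p2 == p, b2 == b, q2 == q, d2 == d & adm i j k]
     then sqrtC (dim j * dim k) / sqrtC (dim i) * F a j k b i p * F d k j c i q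
     else 0].
Definition Delta (h : vec Hidx) : vec (Hidx * Hidx)%type :=
  vsum predT (fun t => vscale (h t) (Delta_basis t)).

(* ---- the modules V_i: basis v^{ab}_i, coordinates on L * L ---- *)
Definition inV (i : L) (x : vec (L * L)%type) := forall a b, ~~ adm a i b -> x (a, b) = 0.
Definition actVb (i : L) (t : Hidx) (x : vec (L * L)%type) : vec (L * L)%type :=
  let: (a, b, l, c, d) := t in
  [ffun w => if (w == (a, b)) && (l == i) then x (c, d) / sqrtC (dim i) else 0].
Definition actV (i : L) (h : vec Hidx) (x : vec (L * L)%type) : vec (L * L)%type :=
  vsum predT (fun t => vscale (h t) (actVb i t x)).

Definition ent (I : finType) (f : vec I -> vec I) (u u' : I) : C := f (delta u') u.
Definition kron (I J : finType) (f : vec I -> vec I) (g : vec J -> vec J)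
  (x : vec (I * J)%type) : vec (I * J)%type :=
  [ffun w => \sum_(w' : (I * J)%type) ent f w.1 w'.1 * ent g w.2 w'.2 * x w'].

(* V_j (x)_C V_k : coordinates ((a,p),(p',b)) for v^{ap}_j (x) v^{p'b}_k *)
Definition TIdx : finType := ((L * L) * (L * L))%type.
Definition inVC (j k : L) (x : vec TIdx) :=
  forall w, ~~ (adm w.1.1 j w.1.2 && adm w.2.1 k w.2.2) -> x w = 0.
Definition actT2 (j k : L) (g : vec (Hidx * Hidx)%type) (x : vec TIdx) : vec TIdx :=
  vsum predT (fun s => vscale (g s) (kron (actVb j s.1) (actVb k s.2) x)).
Definition actT (j k : L) (h : vec Hidx) (x : vec TIdx) : vec TIdx :=
  actT2 j k (Delta h) x.
(* the H_C-module V_j (x) V_k = Delta(eta) . (V_j (x)_C V_k) *)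
Definition inTM (j k : L) (x : vec TIdx) :=
  exists y, inVC j k y /\ x = actT j k eta y.

Definition uvec (j k i a b : L) : vec TIdx :=
  [ffun w => if [&& w.1.1 == a, w.2.2 == b & w.1.2 == w.2.1]
             then F a j k b i w.1.2 else 0].
Definition inW (j k i : L) (x : vec TIdx) :=
  exists c : L -> L -> C,
    x = vsum (fun ab : (L * L)%type => adm ab.1 i ab.2)
             (fun ab => vscale (c ab.1 ab.2) (uvec j k i ab.1 ab.2)).
Definition phi (j k i : L) (x : vec (L * L)%type) : vec TIdx :=
  vsum (fun ab : (L * L)%type => adm ab.1 i ab.2)
       (fun ab => vscale (x ab) (uvec j k i ab.1 ab.2)).

Definition SIdx : finType := (L * (L * L))%type.
Definition inS (j k : L) (z : vec SIdx) :=
  forall i a b, ~~ (adm i j k && adm a i b) -> z (i, (a, b)) = 0.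
Definition comp (z : vec SIdx) (i : L) : vec (L * L)%type := [ffun w => z (i, w)].
Definition actS (h : vec Hidx) (z : vec SIdx) : vec SIdx :=
  [ffun w => actV w.1 h (comp z w.1) w.2].

End Tube.

From Pilot Require Import Defs.
From mathcomp Require Import all_boot all_order all_algebra.
From mathcomp Require Import ring.
Import Order.TTheory GRing.Theory Num.Theory.
Set Implicit Arguments.
Unset Strict Implicit.
Unset Printing Implicit Defensive.
Local Open Scope ring_scope.

(* In the basis of V_j (x) V_k adapted to the F-move, i.e. the vectors u^{ab}_l, which are
   orthonormal for the pairing [ucoord] by unitarity of F, the coproduct of e^{ab}_{l;cd} acts
   as the rank-one operator u^{cd}_l |-> u^{ab}_l / sqrt(d_l), exactly as e^{ab}_{l;cd} acts
   on v^{cd}_l in V_l.  Hence z |-> sum z_l(a,b) u^{ab}_l intertwines the componentwise action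
   on (+)_l V_l with the action through Delta, and its image is Delta(eta).(V_j (x)_C V_k),
   since Delta(eta) acts as the projection onto the span of the u^{ab}_l. *)

Lemma sum_on_section (R : nmodType) (I J : finType) (f : I -> R) (g : J -> I) (pi : I -> J) :
  cancel g pi -> (forall s, f s != 0 -> s = g (pi s)) ->
  \sum_s f s = \sum_t f (g t).
Proof.
move=> gK supp_f; rewrite (partition_big pi predT) //; apply: eq_bigr => t _.
rewrite (bigD1 (g t)) /= ?gK // big1 ?addr0 // => s /andP [/eqP <- ne_s].
by apply/eqP; apply: contraR ne_s => /supp_f {1}->.
Qed.

Section TubeModules.
Variables (C : numClosedFieldType) (U : UFC C).
Local Notation L := (lab U).
Local Notation adm := (adm U).
Local Notation dim := (Defs.dim U).
Local Notation F := (Defs.F U).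
Local Notation vec := (Defs.vec C).

Lemma dim_ge0 a : 0 <= dim a.
Proof. by rewrite ltW ?dim_pos. Qed.

Lemma sqrt_dim_neq0 a : sqrtC (dim a) != 0.
Proof. by rewrite sqrtC_eq0 gt_eqF ?dim_pos. Qed.

Lemma F_reverse a b c d n m : F d c b a n m = (F a b c d n m)^*.
Proof.
have := F_tet12 a b c d n m; rewrite rmorphM /= (geC0_conj (x := sqrtC _)); last first.
  by rewrite sqrtC_ge0 !mulr_ge0 ?dim_ge0.
have -> : dim d * dim c * dim b * dim a = dim a * dim b * dim c * dim d by ring.
by apply: mulIf; rewrite sqrtC_eq0 !mulf_neq0 // gt_eqF ?dim_pos.
Qed.

Lemma ent_actVb i a b l c d u u' :
  ent (actVb i (a, b, l, c, d)) u u' =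
  if [&& u == (a, b), u' == (c, d) & l == i] then (sqrtC (dim i))^-1 else 0.
Proof.
rewrite /ent /actVb /delta !ffunE /= [u' == _]eq_sym.
by case: (u == _); case: (_ == u'); case: (l == i); rewrite ?mul1r ?mul0r.
Qed.

Lemma kron_actVb i i' a b l c d a' b' l' c' d' x w :
  kron (actVb i (a, b, l, c, d)) (actVb i' (a', b', l', c', d')) x w =
  if [&& w.1 == (a, b), w.2 == (a', b'), l == i & l' == i']
  then x ((c, d), (c', d')) / (sqrtC (dim i) * sqrtC (dim i')) else 0.
Proof.
rewrite /kron ffunE (bigD1 ((c, d), (c', d'))) //= big1 => [|w' ne_w'].
  rewrite addr0 !ent_actVb !eqxx /= invfM.
  by case: (_ == (a, b)); case: (_ == (a', b')); case: (l == i); case: (l' == i');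
    rewrite /= ?mul0r ?mulr0 //; ring.
rewrite !ent_actVb; case: (w'.1 =P _) => [E1|_]; last by rewrite andbF !mul0r.
case: (w'.2 =P _) => [E2|_]; last by rewrite andbF mulr0 mul0r.
by move: ne_w'; rewrite -E1 -E2 -surjective_pairing eqxx.
Qed.

Lemma actVE i h x a b :
  actV i h x (a, b) = \sum_(cd : L * L) h (a, b, i, cd.1, cd.2) * x cd / sqrtC (dim i).
Proof.
rewrite ffunE (@sum_on_section _ _ _ _ (fun cd : L * L => (a, b, i, cd.1, cd.2))
  (fun t => (t.1.2, t.2))) => [|[]//|[[[[a' b'] l] c] d]].
  by apply: eq_bigr => -[c d] _; rewrite !ffunE !eqxx mulrA.
rewrite !ffunE /=; case: ((a, b) =P (a', b')) => [[<- <-]|_]; last by rewrite mulr0 eqxx.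
by case: (l =P i) => [->|_]; rewrite ?mulr0 ?eqxx.
Qed.

Lemma adm_rotl a b c : adm b c a = adm a b c.
Proof. by rewrite [RHS]adm_sym12 adm_sym23. Qed.

Lemma inH_eq0 h a b i c d :
  inH h -> ~~ (adm a i b && adm c i d) -> h (a, b, i, c, d) = 0.
Proof. by move=> hH ?; apply: hH; rewrite /Hadm /= (adm_sym23 i) (adm_sym12 i). Qed.

Variables j k : L.

Definition ucoord (l c d : L) (x : vec (TIdx U)) : C :=
  \sum_q (F c j k d l q)^* * x ((c, q), (q, d)).

Definition ucoords (x : vec (TIdx U)) : vec (SIdx U) :=
  [ffun w => ucoord w.1 w.2.1 w.2.2 x].

Definition ucomb (z : vec (SIdx U)) : vec (TIdx U) :=
  vsum predT (fun w : SIdx U => vscale (z w) (uvec j k w.1 w.2.1 w.2.2)).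

Definition restrS (z : vec (SIdx U)) : vec (SIdx U) :=
  [ffun w => if adm w.1 j k && adm w.2.1 w.1 w.2.2 then z w else 0].

Lemma ucoord_uvec l c d l' a b :
  ucoord l c d (uvec j k l' a b) =
  if [&& (a, b) == (c, d), l' == l, adm j k l' & adm c l' d] then 1 else 0.
Proof.
rewrite /ucoord; under eq_bigr do rewrite ffunE /= eqxx andbT -xpair_eqE.
rewrite [(a, b) == _]eq_sym.
case: eqP => [[-> ->]|_]; last by rewrite big1 // => q _; rewrite mulr0.
rewrite /= -F_unitary_rows; apply: eq_bigr => q _; exact: mulrC.
Qed.

Lemma ucoord_ucomb l c d z :
  ucoord l c d (ucomb z) = if adm j k l && adm c l d then z (l, (c, d)) else 0.
Proof.
transitivity (\sum_(w : SIdx U) z w * ucoord l c d (uvec j k w.1 w.2.1 w.2.2)).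
  rewrite /ucoord; under eq_bigr do rewrite ffunE mulr_sumr.
  rewrite exchange_big; apply: eq_bigr => w _; rewrite mulr_sumr.
  by apply: eq_bigr => q _; rewrite ffunE mulrCA.
rewrite (bigD1 (l, (c, d))) //= big1 => [|[l' [a b]] /= ne].
  by rewrite ucoord_uvec !eqxx /= addr0; case: ifP; rewrite ?mulr1 ?mulr0.
rewrite ucoord_uvec; case: eqP => [[ea eb]|_]; last by rewrite mulr0.
by case: (l' =P l) ne => [->|_]; rewrite ?ea ?eb ?eqxx ?mulr0.
Qed.

Lemma ucoords_ucomb z : ucoords (ucomb z) = restrS z.
Proof. by apply/ffunP => -[l [c d]]; rewrite !ffunE ucoord_ucomb adm_rotl. Qed.

Lemma uvec_eq0 l a b : ~~ (adm l j k && adm a l b) -> uvec j k l a b = 0.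
Proof.
move=> nadm; apply/ffunP => w; rewrite !ffunE; case: ifP => // _.
by apply: F_supp; apply: contra nadm => /and4P [_ _ ? ?]; rewrite -adm_rotl; apply/andP.
Qed.

Lemma actT2_Delta_basis a b l c d x :
  actT2 j k (Delta_basis (a, b, l, c, d)) x =
  vscale (ucoord l c d x / sqrtC (dim l)) (uvec j k l a b).
Proof.
apply/ffunP => -[[w11 w12] [w21 w22]]; rewrite !ffunE /=.
rewrite (@sum_on_section _ _ _ _ (fun q => ((a, w12, j, c, q), (w12, b, k, q, d)))
  (fun s => s.1.2)) => [|//|]; last first.
  move=> [[[[[a1 p] j'] c1] q] [[[[p2 b2] k'] q2] d2]] /=.
  rewrite [vscale _ _ _]ffunE kron_actVb ffunE /=.
  case: ifP => [|_]; last by rewrite mul0r eqxx.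
  case/and5P => /eqP -> /eqP -> /eqP -> /eqP -> /and3P [/eqP -> /eqP -> _].
  case: ifP => [|_]; last by rewrite mulr0 eqxx.
  by case/and4P => /eqP [_ <-] _ /eqP -> /eqP ->.
under eq_bigr do rewrite [vscale _ _ _]ffunE kron_actVb ffunE /= !eqxx !xpair_eqE eqxx !andbT.
have [adm_ljk|nadm] := boolP (adm l j k); last first.
  rewrite big1 => [|q _]; last by rewrite /= mul0r.
  rewrite F_supp ?if_same ?mulr0 //; apply: contra nadm.
  by case/and4P => _ _ + _; rewrite adm_rotl.
rewrite [w12 == w21]eq_sym.
case: (w11 =P a) => [<-|_]; last by rewrite big1 ?mulr0 // => q _; rewrite mulr0.
case: (w22 =P b) => [<-|_]; last by rewrite big1 ?mulr0 // => q _; rewrite andbF mulr0.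
case: (w21 =P w12) => [<-|_]; last by rewrite big1 ?mulr0 // => q _; rewrite mulr0.
rewrite /= /ucoord !mulr_suml; apply: eq_bigr => q _.
(* the reflection symmetry of F turns the second F-factor of Delta into the coefficient of ucoord *)
rewrite (F_reverse c) sqrtCM ?nnegrE ?dim_ge0 //.
have := sqrt_dim_neq0 j; have := sqrt_dim_neq0 k; have := sqrt_dim_neq0 l.
move: (sqrtC (dim j)) (sqrtC (dim k)) (sqrtC (dim l)) => sj sk sl sl0 sk0 sj0.
by field; rewrite sj0 sk0 sl0.
Qed.

Lemma actT_ucoords h x : actT j k h x = ucomb (actS h (ucoords x)).
Proof.
apply/ffunP => w; rewrite /actT /actT2 !ffunE.
transitivity (\sum_(t : Hidx U) h t * actT2 j k (Delta_basis t) x w).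
  under eq_bigr do rewrite !ffunE mulr_suml.
  rewrite exchange_big; apply: eq_bigr => t _; rewrite ffunE mulr_sumr.
  by apply: eq_bigr => s _; rewrite !ffunE mulrA.
rewrite (@sum_on_section _ _ _ _
  (fun p : SIdx U * (L * L) => (p.1.2.1, p.1.2.2, p.1.1, p.2.1, p.2.2))
  (fun t => let: (a, b, l, c, d) := t in ((l, (a, b)), (c, d))))
  => [|[[? [? ?]] [? ?]] //|[[[[? ?] ?] ?] ?] //].
rewrite -(pair_bigA _ (fun (v : SIdx U) (cd : L * L) =>
  h (v.2.1, v.2.2, v.1, cd.1, cd.2) *
  actT2 j k (Delta_basis (v.2.1, v.2.2, v.1, cd.1, cd.2)) x w)) /=.
apply: eq_bigr => -[l [a b]] _; rewrite [RHS]ffunE [actS _ _ _]ffunE /= actVE mulr_suml.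
by apply: eq_bigr => -[c d] _; rewrite actT2_Delta_basis !ffunE /=; ring.
Qed.

Lemma inS_restrS z : inS j k (restrS z).
Proof. by move=> l a b nadm; rewrite ffunE (negbTE nadm). Qed.

Lemma restrS_id z : inS j k z -> restrS z = z.
Proof.
by move=> zS; apply/ffunP => -[l [a b]]; rewrite ffunE /=; case: ifP => // /negbT /zS.
Qed.

Lemma ucomb_restrS z : ucomb (restrS z) = ucomb z.
Proof.
apply/ffunP => w; rewrite [LHS]ffunE [RHS]ffunE; apply: eq_bigr => -[l [a b]] _.
rewrite [LHS]ffunE [RHS]ffunE [restrS _ _]ffunE /=.
by case: ifP => // /negbT nadm; rewrite uvec_eq0 // ffunE !mulr0.
Qed.

Lemma ucomb_inj z z' : inS j k z -> inS j k z' -> ucomb z = ucomb z' -> z = z'.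
Proof. by move=> zS z'S E; rewrite -(restrS_id zS) -(restrS_id z'S) -!ucoords_ucomb E. Qed.

Lemma lin_ucomb : lin ucomb.
Proof.
move=> a z z'; apply/ffunP => w; rewrite !ffunE mulr_sumr -big_split.
by apply: eq_bigr => v _; rewrite !ffunE mulrDl mulrA.
Qed.

Lemma actT_ucomb h z : inS j k z -> actT j k h (ucomb z) = ucomb (actS h z).
Proof. by move=> zS; rewrite actT_ucoords ucoords_ucomb restrS_id. Qed.

Lemma actV_eta i x : inV i x -> actV i (eta U) x = x.
Proof.
move=> xV; apply/ffunP => -[a b]; rewrite actVE (bigD1 (a, b)) //= big1 => [|[c d] /= ne].
  rewrite ffunE !eqxx addr0 /=; case: (boolP (adm a i b)) => [_|/xV ->].
    by rewrite mulrAC divff ?mul1r ?sqrt_dim_neq0.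
  by rewrite !mulr0 mul0r.
rewrite ffunE; case: ifP => [/and3P [/eqP ec /eqP ed _]|_]; last by rewrite !mul0r.
by move: ne; rewrite ec ed eqxx.
Qed.

Lemma actS_eta z : inS j k z -> actS (eta U) z = z.
Proof.
move=> zS; apply/ffunP => -[l [a b]]; rewrite ffunE actV_eta ?ffunE // => c d nadm.
by rewrite ffunE zS // (negbTE nadm) andbF.
Qed.

Lemma inVC_ucomb z : inVC j k (ucomb z).
Proof.
move=> w nadm; rewrite ffunE big1 // => -[l [a b]] _; rewrite !ffunE /=.
case: ifP => [/and3P [/eqP ea /eqP eb /eqP e]|_]; last by rewrite mulr0.
rewrite F_supp ?mulr0 //; apply: contra nadm => /and4P [adm1 adm2 _ _].
by rewrite ea adm1 -e eb adm2.
Qed.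

Lemma inTM_ucomb z : inS j k z -> inTM j k (ucomb z).
Proof.
by move=> zS; exists (ucomb z); split; [exact: inVC_ucomb | rewrite actT_ucomb ?actS_eta].
Qed.

Lemma inTM_ucombP x : inTM j k x -> exists z, inS j k z /\ ucomb z = x.
Proof.
move=> [y [_ ->]]; exists (restrS (actS (eta U) (ucoords y))).
by split; [exact: inS_restrS | rewrite ucomb_restrS actT_ucoords].
Qed.

Definition restrV (i : L) (x : vec (L * L)%type) : vec (L * L)%type :=
  [ffun ab => if adm ab.1 i ab.2 then x ab else 0].

Definition in_summand (i : L) (x : vec (L * L)%type) : vec (SIdx U) :=
  [ffun w => if w.1 == i then restrV i x w.2 else 0].

Lemma inV_restrV i x : inV i (restrV i x).
Proof. by move=> a b nadm; rewrite ffunE (negbTE nadm). Qed.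

Lemma restrV_id i x : inV i x -> restrV i x = x.
Proof. by move=> xV; apply/ffunP => -[a b]; rewrite ffunE; case: ifP => // /negbT /xV. Qed.

Lemma inS_in_summand i x : adm i j k -> inS j k (in_summand i x).
Proof.
move=> adm_ijk l a b; rewrite !ffunE /=; case: eqP => [->|//].
by rewrite adm_ijk /= => /negbTE ->.
Qed.

Lemma phi_ucomb i x : phi j k i x = ucomb (in_summand i x).
Proof.
apply/ffunP => w; rewrite [LHS]ffunE [RHS]ffunE.
rewrite (@sum_on_section _ _ _ _ (fun ab : L * L => (i, ab)) snd) => [|//|[l ab]]; last first.
  by rewrite ffunE [in_summand _ _ _]ffunE /=; case: (l =P i) => [->|_]; rewrite ?mul0r ?eqxx.
rewrite big_mkcond; apply: eq_bigr => -[a b] _ /=.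
by rewrite !ffunE eqxx /=; case: ifP; rewrite ?mul0r.
Qed.

Lemma phi_restrV i x : phi j k i (restrV i x) = phi j k i x.
Proof.
apply/ffunP => w; rewrite [LHS]ffunE [RHS]ffunE; apply: eq_bigr => ab adm_ab.
by rewrite !ffunE adm_ab.
Qed.

Lemma actV_restrV i h x : inH h -> actV i h (restrV i x) = restrV i (actV i h x).
Proof.
move=> hH; apply/ffunP => -[a b]; rewrite [RHS]ffunE /= !actVE.
case: ifP => adm_aib; last by rewrite big1 // => cd _; rewrite (inH_eq0 hH) ?mul0r // adm_aib.
apply: eq_bigr => -[c d] _; rewrite ffunE /=; case: ifP => // /negbT nadm.
by rewrite (inH_eq0 hH) ?mul0r // (negbTE nadm) andbF.
Qed.

Lemma actS_in_summand i h x :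
  inH h -> actS h (in_summand i x) = in_summand i (actV i h x).
Proof.
move=> hH; apply/ffunP => -[l [a b]].
rewrite ffunE [in_summand _ _ _]ffunE /=; case: (l =P i) => [->|ne].
  have -> : Defs.comp (in_summand i x) i = restrV i x.
    by apply/ffunP => cd; rewrite !ffunE eqxx.
  by rewrite actV_restrV.
by rewrite actVE big1 // => cd _; rewrite !ffunE /= (introF eqP ne) mulr0 mul0r.
Qed.

Lemma phi_actV i h x :
  adm i j k -> inH h -> phi j k i (actV i h x) = actT j k h (phi j k i x).
Proof.
move=> adm_ijk hH; rewrite !phi_ucomb actT_ucomb ?actS_in_summand //; exact: inS_in_summand.
Qed.

Lemma phi_inj i x y :
  adm i j k -> inV i x -> inV i y -> phi j k i x = phi j k i y -> x = y.
Proof.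
move=> adm_ijk xV yV; rewrite !phi_ucomb => /ucomb_inj.
move=> /(_ (inS_in_summand _ adm_ijk) (inS_in_summand _ adm_ijk)) E.
rewrite -(restrV_id xV) -(restrV_id yV); apply/ffunP => ab.
by have := congr1 (fun z : vec (SIdx U) => z (i, ab)) E; rewrite /= !ffunE eqxx.
Qed.

Lemma inWP i x : inW j k i x <-> exists y, x = phi j k i y.
Proof.
split => [[c ->]|[y ->]]; [exists [ffun ab => c ab.1 ab.2] | exists (fun a b => y (a, b))];
  by apply/ffunP => w; rewrite !ffunE; apply: eq_bigr => -[a b] _; rewrite !ffunE.
Qed.

End TubeModules.

Theorem mainTheorem9 (C : numClosedFieldType) (U : UFC C) (j k : lab U) :
  (forall i : lab U, adm U i j k ->
     (forall x : vec C (TIdx U), inW j k i x -> inTM j k x) /\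
     (forall (h : vec C (Hidx U)) (x : vec C (TIdx U)),
        inH h -> inW j k i x -> inW j k i (actT j k h x)) /\
     (forall x : vec C (lab U * lab U)%type, inV i x -> inW j k i (phi j k i x)) /\
     (forall x : vec C (TIdx U), inW j k i x ->
        exists y : vec C (lab U * lab U)%type, inV i y /\ phi j k i y = x) /\
     (forall x y : vec C (lab U * lab U)%type,
        inV i x -> inV i y -> phi j k i x = phi j k i y -> x = y) /\
     (forall (h : vec C (Hidx U)) (x : vec C (lab U * lab U)%type),
        inH h -> inV i x -> phi j k i (actV i h x) = actT j k h (phi j k i x))) /\
  (exists Psi : vec C (SIdx U) -> vec C (TIdx U),
     lin Psi /\
     (forall z, inS j k z -> inTM j k (Psi z)) /\
     (forall x, inTM j k x -> exists z, inS j k z /\ Psi z = x) /\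
     (forall z z', inS j k z -> inS j k z' -> Psi z = Psi z' -> z = z') /\
     (forall (h : vec C (Hidx U)) z, inH h -> inS j k z ->
        Psi (actS h z) = actT j k h (Psi z))).
Proof.
split=> [i adm_ijk|].
  split=> [x /inWP [y ->]|]; first by rewrite phi_ucomb; apply/inTM_ucomb/inS_in_summand.
  split=> [h x hH /inWP [y ->]|]; first by apply/inWP; exists (actV i h y); rewrite phi_actV.
  split=> [x _|]; first by apply/inWP; exists x.
  split=> [x /inWP [y ->]|].
    by exists (restrV i y); split; [exact: inV_restrV | exact: phi_restrV].
  split=> [x y|h x hH _]; [exact: phi_inj | exact: phi_actV].
exists (ucomb j k); split; first exact: lin_ucomb.
split; first exact: inTM_ucomb.
split; first exact: inTM_ucombP.
split; first exact: ucomb_inj.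
by move=> h z _ zS; rewrite actT_ucomb.
Qed.
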